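(* Let $G$ be an $\varepsilon$-graph with finite vertex set $\mathcal{V}\subset\mathbb{R}^K$. Then for all $x,y\in\mathcal{V}$, $$\tfrac14\,\varepsilon\,\big(d_{G,SP}(x,y)-1\big)\le d_{G,E}(x,y)\le\varepsilon\,d_{G,SP}(x,y).$$
   Context: The $\varepsilon$-graph on $\mathcal{V}$ joins distinct $x,y$ iff $\|x-y\|\le\varepsilon$. For a path $p=(v_0,\dots,v_l)$ in $G$ let $l=|p|$ be its number of edges. $d_{G,SP}(x,y)=\min_p|p|$ and $d_{G,E}(x,y)=\min_p\sum_{i=1}^{|p|}\|v_{i-1}-v_i\|$, minima over paths from $x$ to $y$ (the graph is assumed connected so these are finite). *)

From HB Require Import structures.
From mathcomp Require Import all_boot all_order all_algebra.
From mathcomp Require Import boolp classical_sets reals.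
Set Implicit Arguments. Unset Strict Implicit. Unset Printing Implicit Defensive.
Import Order.TTheory GRing.Theory Num.Theory.
Local Open Scope ring_scope.
Local Open Scope classical_set_scope.

Section EpsGraph.
Variables (R : realType) (K : nat).
Implicit Types (u v x y : 'rV[R]_K) (s : seq 'rV[R]_K).

Definition enorm v : R := Num.sqrt (\sum_(i < K) v ord0 i ^+ 2).

Definition eedge (eps : R) u v : bool := (u != v) && (enorm (u - v) <= eps).

(* x :: s is a path (v_0 = x, ..., v_l = last x s) in the eps-graph on V
   from x to y; its number of edges is size s. *)
Definition is_epath (eps : R) (V : seq 'rV[R]_K) x y s : bool :=
  [&& path (eedge eps) x s, all (mem V) (x :: s) & last x s == y].

Fixpoint plen x s : R :=
  if s is v :: s' then enorm (x - v) + plen v s' else 0.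

Definition eg_connected (eps : R) V : Prop :=
  forall x y, x \in V -> y \in V -> exists s, is_epath eps V x y s.

Definition dSP (eps : R) V x y : nat :=
  match pselect (exists n, `[< exists s, is_epath eps V x y s /\ size s = n >]) with
  | left H => ex_minn H
  | right _ => 0%N
  end.

(* d_{G,E}(x,y): minimal Euclidean length of a path from x to y
   (taken as the infimum, which is attained since the graph is finite). *)
Definition dE (eps : R) V x y : R :=
  inf [set plen x s | s in [set s | is_epath eps V x y s]].

End EpsGraph.

From HB Require Import structures.
From mathcomp Require Import all_boot all_order all_algebra.
From mathcomp Require Import boolp classical_sets reals.
From mathcomp Require Import ring lra.
Set Implicit Arguments. Unset Strict Implicit. Unset Printing Implicit Defensive.
Import Order.TTheory GRing.Theory Num.Theory.
Local Open Scope ring_scope.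
Local Open Scope classical_set_scope.

(* Every edge has length at most eps, whence the upper bound.  For the lower
   bound, shorten a path: if consecutive edges x-v and v-w have total length at
   most eps, then x and w are equal or adjacent, so v can be skipped without
   making the path longer.  When no such skip is possible, any two consecutive
   edges together are longer than eps, so a path with l edges has Euclidean
   length at least eps (l - 1) / 2; and l >= d_SP.  This gives the bound with
   the constant 1/2 in place of 1/4. *)

Section EuclideanNorm.
Variable R : realType.

Lemma CauchySchwarz_sum (n : nat) (a b : 'I_n -> R) :
  (\sum_i a i * b i) ^+ 2 <= (\sum_i a i ^+ 2) * (\sum_i b i ^+ 2).
Proof.
have prod_sum (c d : 'I_n -> R) :
    (\sum_i c i) * (\sum_j d j) = \sum_i \sum_j c i * d j.
  by rewrite mulr_suml; apply: eq_bigr => i _; rewrite mulr_sumr.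
have lagrange : \sum_i \sum_j (a i * b j - a j * b i) ^+ 2 =
    2 * ((\sum_i a i ^+ 2) * (\sum_i b i ^+ 2) - (\sum_i a i * b i) ^+ 2).
  transitivity (\sum_i \sum_j a i ^+ 2 * b j ^+ 2
                + \sum_i \sum_j a j ^+ 2 * b i ^+ 2
                - 2 * \sum_i \sum_j a i * b i * (a j * b j)).
    rewrite mulr_sumr -big_split -sumrB /=; apply: eq_bigr => i _.
    by rewrite mulr_sumr -big_split -sumrB /=; apply: eq_bigr => j _; ring.
  rewrite (exchange_big _ _ _ _ _ (fun i j => a j ^+ 2 * b i ^+ 2)) /=.
  by rewrite expr2 !prod_sum; ring.
have : 0 <= \sum_i \sum_j (a i * b j - a j * b i) ^+ 2.
  by apply: sumr_ge0 => i _; apply: sumr_ge0 => j _; exact: sqr_ge0.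
rewrite lagrange; lra.
Qed.

Variable K : nat.
Implicit Types u v w x : 'rV[R]_K.

Lemma enorm_ge0 u : 0 <= enorm u.
Proof. exact: sqrtr_ge0. Qed.

Lemma ler_enormD u v : enorm (u + v) <= enorm u + enorm v.
Proof.
rewrite /enorm; set A := \sum_i u ord0 i ^+ 2; set B := \sum_i v ord0 i ^+ 2.
have A_ge0 : 0 <= A by apply: sumr_ge0 => i _; exact: sqr_ge0.
have B_ge0 : 0 <= B by apply: sumr_ge0 => i _; exact: sqr_ge0.
set S := \sum_i u ord0 i * v ord0 i.
have -> : \sum_i (u + v) ord0 i ^+ 2 = A + B + 2 * S.
  rewrite /A /B /S mulr_sumr -!big_split; apply: eq_bigr => i _ /=.
  by rewrite mxE; ring.
have S_le : S <= Num.sqrt A * Num.sqrt B.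
  rewrite -sqrtrM // (le_trans (ler_norm S)) // -sqrtr_sqr ler_sqrt ?mulr_ge0 //.
  exact: CauchySchwarz_sum.
rewrite -[leRHS]ger0_norm ?addr_ge0 ?sqrtr_ge0 // -sqrtr_sqr ler_sqrt ?sqr_ge0 //.
by rewrite sqrrD !sqr_sqrtr //; lra.
Qed.

Lemma enorm_triangle x v w : enorm (x - w) <= enorm (x - v) + enorm (v - w).
Proof. by have := ler_enormD (x - v) (v - w); rewrite addrA subrK. Qed.

End EuclideanNorm.

Section EpsPaths.
Variables (R : realType) (K : nat) (eps : R) (V : seq 'rV[R]_K).
Implicit Types (v w x y : 'rV[R]_K) (s t : seq 'rV[R]_K).

Lemma is_epath_cons x y v s :
  is_epath eps V x y (v :: s) =
  [&& eedge eps x v, x \in V & is_epath eps V v y s].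
Proof. by rewrite /is_epath /= -!andbA; case: (x \in V); rewrite /= ?andbF. Qed.

Lemma plen_ge0 x s : 0 <= plen x s.
Proof. by elim: s x => [|v s IHs] x //=; rewrite addr_ge0 ?enorm_ge0. Qed.

Lemma plen_le_size x s : path (eedge eps) x s -> plen x s <= eps * (size s)%:R.
Proof.
elim: s x => [|v s IHs] x /=; first by rewrite mulr0.
case/andP=> /andP[_ xv_le] /IHs; rewrite -natr1; lra.
Qed.

Hypothesis eps_ge0 : 0 <= eps.

Lemma epath_shortcut x y s : is_epath eps V x y s ->
  exists2 s', is_epath eps V x y s' & eps / 2 * ((size s')%:R - 1) <= plen x s.
Proof.
have [n] := ubnP (size s); elim: n s x => // n IHn [|v [|w t]] x /= size_lt.
- by move=> Ps; exists [::] => //=; rewrite sub0r mulrN1 oppr_le0 divr_ge0.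
- by move=> Ps; exists [:: v] => //=; rewrite subrr mulr0 addr_ge0 ?enorm_ge0.
rewrite !is_epath_cons => /and3P[xv xV /and3P[vw vV Pt]].
have [xv_ge0 vw_ge0] := (enorm_ge0 (x - v), enorm_ge0 (v - w)).
have [long|short] := ltrP eps (enorm (x - v) + enorm (v - w)).
  have [s' Ps' le_s'] := IHn t w (ltnW size_lt) Pt.
  exists [:: v, w & s']; first by rewrite !is_epath_cons xv xV vw vV Ps'.
  by rewrite /= -[(size s').+2]addn2 natrD; set m := (size s')%:R in le_s' *; lra.
have [<-|xw] := eqVneq w x.
  have [s' Ps' le_s'] := IHn t w (ltnW size_lt) Pt.
  exists s' => //; apply: le_trans le_s' _.
  by rewrite addrA lerDr addr_ge0 ?enorm_ge0.
have Pwt : is_epath eps V x y (w :: t).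
  rewrite is_epath_cons xV Pt /eedge eq_sym xw /= !andbT.
  exact: le_trans (enorm_triangle x v w) short.
have [s' Ps' le_s'] := IHn (w :: t) x size_lt Pwt.
exists s' => //; apply: le_trans le_s' _ => /=.
by rewrite addrA lerD2r enorm_triangle.
Qed.

End EpsPaths.

Section GraphDistances.
Variables (R : realType) (K : nat) (eps : R) (V : seq 'rV[R]_K) (x y : 'rV[R]_K).
Implicit Types s : seq 'rV[R]_K.

Lemma dSP_le_size s : is_epath eps V x y s -> (dSP eps V x y <= size s)%N.
Proof.
move=> Ps; rewrite /dSP; case: pselect => [ex_size | []]; last first.
  by exists (size s); apply/asboolP; exists s.
by case: ex_minnP => m _; apply; apply/asboolP; exists s.
Qed.

Lemma dSP_attained s0 : is_epath eps V x y s0 ->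
  exists2 s, is_epath eps V x y s & size s = dSP eps V x y.
Proof.
move=> Ps0; rewrite /dSP; case: pselect => [ex_size | []]; last first.
  by exists (size s0); apply/asboolP; exists s0.
by case: ex_minnP => m /asboolP[s [Ps <-]] _; exists s.
Qed.

Lemma dE_le_plen s : is_epath eps V x y s -> dE eps V x y <= plen x s.
Proof.
move=> Ps; apply: ge_inf; last by exists s.
by exists 0 => _ [t _ <-]; exact: plen_ge0.
Qed.

Lemma lb_le_dE c s0 : is_epath eps V x y s0 ->
  (forall s, is_epath eps V x y s -> c <= plen x s) -> c <= dE eps V x y.
Proof.
move=> Ps0 c_le; apply: lb_le_inf; first by exists (plen x s0), s0.
by move=> _ [s Ps <-]; exact: c_le.
Qed.

End GraphDistances.

Theorem mainTheorem7 (R : realType) (K : nat) (eps : R) (V : seq 'rV[R]_K)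
    (heps : 0 < eps) (hconn : eg_connected eps V)
    (x y : 'rV[R]_K) (hx : x \in V) (hy : y \in V) :
  eps / 4 * ((dSP eps V x y)%:R - 1) <= dE eps V x y /\
  dE eps V x y <= eps * (dSP eps V x y)%:R.
Proof.
have [s0 Ps0] := hconn x y hx hy.
have [sm Psm sm_dSP] := dSP_attained Ps0.
split.
- apply: lb_le_dE Ps0 _ => s Ps.
  have [s' Ps' le_s'] := epath_shortcut (ltW heps) Ps.
  apply: (@le_trans _ _ (eps / 4 * ((size s')%:R - 1))).
    by rewrite ler_pM2l ?divr_gt0 // lerD2r ler_nat (dSP_le_size Ps').
  have := plen_ge0 x s; set m := (size s')%:R in le_s' *; lra.
- rewrite -sm_dSP; apply: le_trans (dE_le_plen Psm) (plen_le_size _).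
  by case/and3P: Psm.
Qed.
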